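(* Let $X$ be as in the context. (1) If $\limsup_{x\to\infty}H_1(x)<1$, then there exist a positive function $f$ on $\mathbb S$ and $\epsilon>0$ such that $\lim_{x\to\infty}f(x)=\infty$, $\mathcal A f(x)<0$ for all sufficiently large $x\in\mathbb S$, and $$\limsup_{x\to\infty}\mathcal A f(x)\le-\Big(\frac{\epsilon}{2}\Big)^2\liminf_{x\to\infty}\frac{v(x)}{x^2(\log x)^{2-\epsilon/2}}\le 0.$$ (2) If $\liminf_{x\to\infty}H_1(x)>1$, then there exist a positive function $f$ on $\mathbb S$ and $\epsilon>0$ such that $\lim_{x\to\infty}f(x)=0$, $\mathcal A f(x)<0$ for all sufficiently large $x\in\mathbb S$, and $$\limsup_{x\to\infty}\mathcal A f(x)\le-\Big(\frac{\epsilon}{2}\Big)^2\liminf_{x\to\infty}\frac{v(x)}{x^2(\log x)^{2+\epsilon/2}}\le 0.$$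
   Context: Let $\mathbb S\subseteq\mathbb Z_{\ge0}$ be an infinite set and let $X$ be an irreducible continuous-time Markov chain on $\mathbb S$ whose generator acts on functions $f:\mathbb S\to\mathbb R$ by $\mathcal A f(x)=\sum_{\eta\in\mathbb Z}\lambda_\eta(x)\big(f(x+\eta)-f(x)\big)$, where $\lambda_\eta(x)$ is the rate of the jump $x\to x+\eta$ (and $\lambda_\eta(x)=0$ whenever $x+\eta\notin\mathbb S$). Standing assumption: (a) there is a finite set $\Gamma\subset\mathbb Z$ such that $\lambda_\eta\equiv0$ for $\eta\notin\Gamma$; (b) $0\le\lambda_\eta(x)<\infty$ for all $x,\eta$. Define $m(x)=\sum_{\eta}\eta\,\lambda_\eta(x)$, $v(x)=\frac12\sum_\eta\eta^2\lambda_\eta(x)$ (positive on $\mathbb S$ by irreducibility), and for a constant $p$ and $x>1$, $H_p(x)=\dfrac{(\log x)(m(x)x-p\,v(x))}{v(x)}$. All limits are as $x\to\infty$ along $\mathbb S$. *)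

From Stdlib Require Import Reals ZArith List Relations.
From Coquelicot Require Import Coquelicot.
Open Scope R_scope.

(* A state space S ⊆ Z_{>=0}, rates lam η x (rate of jump x -> x+η),
   and a finite list Gam of jump sizes outside of which lam vanishes. *)

Definition sumG (Gam : list Z) (g : Z -> R) : R :=
  fold_right (fun eta acc => g eta + acc) 0 Gam.

Definition gen (Gam : list Z) (lam : Z -> Z -> R) (f : Z -> R) (x : Z) : R :=
  sumG Gam (fun eta => lam eta x * (f (x + eta)%Z - f x)).

Definition drift (Gam : list Z) (lam : Z -> Z -> R) (x : Z) : R :=
  sumG Gam (fun eta => IZR eta * lam eta x).

Definition diffu (Gam : list Z) (lam : Z -> Z -> R) (x : Z) : R :=
  / 2 * sumG Gam (fun eta => IZR eta ^ 2 * lam eta x).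

Definition Hp (Gam : list Z) (lam : Z -> Z -> R) (p : R) (x : Z) : R :=
  ln (IZR x) * (drift Gam lam x * IZR x - p * diffu Gam lam x) / diffu Gam lam x.

Definition step (S : Z -> Prop) (lam : Z -> Z -> R) (x y : Z) : Prop :=
  S x /\ S y /\ 0 < lam (y - x)%Z x.

Definition irreducible (S : Z -> Prop) (lam : Z -> Z -> R) : Prop :=
  forall x y, S x -> S y -> clos_refl_trans Z (step S lam) x y.

(* Infinite subset of Z_{>=0}: unbounded above. *)
Definition unbounded (S : Z -> Prop) : Prop :=
  forall N : Z, exists x, S x /\ (N <= x)%Z.

Definition tail_sup (S : Z -> Prop) (g : Z -> R) (n : nat) : Rbar :=
  Lub_Rbar (fun y => exists x, S x /\ (Z.of_nat n <= x)%Z /\ y = g x).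
Definition tail_inf (S : Z -> Prop) (g : Z -> R) (n : nat) : Rbar :=
  Glb_Rbar (fun y => exists x, S x /\ (Z.of_nat n <= x)%Z /\ y = g x).
Definition limsupS (S : Z -> Prop) (g : Z -> R) : Rbar :=
  Inf_seq (tail_sup S g).
Definition liminfS (S : Z -> Prop) (g : Z -> R) : Rbar :=
  Sup_seq (tail_inf S g).

Definition to_infty_S (S : Z -> Prop) (g : Z -> R) : Prop :=
  forall M : R, exists N : Z, forall x, S x -> (N <= x)%Z -> M < g x.

Definition to_lim_S (S : Z -> Prop) (g : Z -> R) (l : R) : Prop :=
  forall e : R, 0 < e -> exists N : Z, forall x, S x -> (N <= x)%Z -> Rabs (g x - l) < e.

Definition eventually_S (S : Z -> Prop) (P : Z -> Prop) : Prop :=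
  exists N : Z, forall x, S x -> (N <= x)%Z -> P x.

Definition chain_ok (S : Z -> Prop) (Gam : list Z) (lam : Z -> Z -> R) : Prop :=
  (forall x, S x -> (0 <= x)%Z) /\
  unbounded S /\
  NoDup Gam /\
  (forall eta x, S x -> ~ In eta Gam -> lam eta x = 0) /\
  (forall eta x, S x -> 0 <= lam eta x) /\
  (forall eta x, S x -> ~ S (x + eta)%Z -> lam eta x = 0) /\
  irreducible S lam.

(* The Lyapunov function is f(x) = (log x)^b, with b = a > 0 in case (1) and b = -a in
   case (2).  With K = sum |eta| bounding the jumps, a third-order Taylor expansion gives
     A f(x) <= f'(x) m(x) + f''(x) v(x) + 16 K v(x) / x^3,
   and f' m + f'' v = b (H_1(x) + b - 1) v(x) / (x^2 (log x)^(2-b)).  For large x the cubic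
   term is at most 2 a^2 times this weight, so if H_1 stays below 1 - d (resp. above 1 + d)
   and a <= d/4, then A f <= - a^2 v / (x^2 (log x)^(2-b)) eventually; v > 0 everywhere by
   irreducibility, and the claims follow with eps = 2a. *)

From Stdlib Require Import Reals ZArith List Relations Lra Lia Classical.
From Coquelicot Require Import Coquelicot.
Open Scope R_scope.

(** * Limits superior and inferior along [S] *)

Lemma eventually_S_mono (S P Q : Z -> Prop) :
  eventually_S S P -> (forall x, S x -> P x -> Q x) -> eventually_S S Q.
Proof. intros [N HN] HPQ. exists N. intros x Sx Hx. auto. Qed.

Lemma eventually_S_and (S P Q : Z -> Prop) :
  eventually_S S P -> eventually_S S Q -> eventually_S S (fun x => P x /\ Q x).
Proof.
  intros [N HN] [M HM]. exists (Z.max N M). intros x Sx Hx. split.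
  - apply HN; [assumption | lia].
  - apply HM; [assumption | lia].
Qed.

Lemma tail_sup_ub S (g : Z -> R) n x :
  S x -> (Z.of_nat n <= x)%Z -> Rbar_le (g x) (tail_sup S g n).
Proof. intros Sx Hx. apply (proj1 (Lub_Rbar_correct _)). eauto. Qed.

Lemma tail_sup_le S (g : Z -> R) n (B : Rbar) :
  (forall x, S x -> (Z.of_nat n <= x)%Z -> Rbar_le (g x) B) ->
  Rbar_le (tail_sup S g n) B.
Proof. intros H. apply (proj2 (Lub_Rbar_correct _)). intros y (x & Sx & Hx & ->). auto. Qed.

Lemma tail_inf_lb S (h : Z -> R) n x :
  S x -> (Z.of_nat n <= x)%Z -> Rbar_le (tail_inf S h n) (h x).
Proof. intros Sx Hx. apply (proj1 (Glb_Rbar_correct _)). eauto. Qed.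

Lemma tail_inf_ge S (h : Z -> R) n (B : Rbar) :
  (forall x, S x -> (Z.of_nat n <= x)%Z -> Rbar_le B (h x)) ->
  Rbar_le B (tail_inf S h n).
Proof. intros H. apply (proj2 (Glb_Rbar_correct _)). intros y (x & Sx & Hx & ->). auto. Qed.

Lemma tail_inf_mono S (h : Z -> R) n m :
  (n <= m)%nat -> Rbar_le (tail_inf S h n) (tail_inf S h m).
Proof. intros Hnm. apply tail_inf_ge. intros x Sx Hx. apply tail_inf_lb; [assumption | lia]. Qed.

Lemma Inf_seq_le_term (u : nat -> Rbar) n : Rbar_le (Inf_seq u) (u n).
Proof. apply (proj1 (is_inf_seq_glb _ _ (Inf_seq_correct u))). eauto. Qed.

Lemma limsup_lt S (g : Z -> R) r : Rbar_lt (limsupS S g) (Finite r) ->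
  exists d, 0 < d /\ eventually_S S (fun x => g x <= r - d).
Proof.
  intros Hlt.
  assert (Hn : exists n, Rbar_lt (tail_sup S g n) r).
  { apply NNPP. intros Hno. apply (Rbar_lt_not_le _ _ Hlt).
    apply (proj2 (is_inf_seq_glb _ _ (Inf_seq_correct _))).
    intros y [n ->]. apply Rbar_not_lt_le. eauto. }
  destruct Hn as [n Hn].
  assert (Hd : exists d, 0 < d /\ Rbar_le (tail_sup S g n) (r - d)).
  { destruct (tail_sup S g n) as [s| |]; simpl in Hn |- *; try contradiction.
    - exists ((r - s) / 2). split; lra.
    - exists 1. split; [lra | exact I]. }
  destruct Hd as (d & Hd & Hle). exists d. split; [exact Hd|].
  exists (Z.of_nat n). intros x Sx Hx.
  exact (Rbar_le_trans _ _ (Finite (r - d)) (tail_sup_ub S g n x Sx Hx) Hle).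
Qed.

Lemma liminf_gt S (g : Z -> R) r : Rbar_lt (Finite r) (liminfS S g) ->
  exists d, 0 < d /\ eventually_S S (fun x => r + d <= g x).
Proof.
  intros Hlt. apply Sup_seq_minor_lt in Hlt. destruct Hlt as [n Hn].
  assert (Hd : exists d, 0 < d /\ Rbar_le (r + d) (tail_inf S g n)).
  { destruct (tail_inf S g n) as [s| |]; simpl in Hn |- *; try contradiction.
    - exists ((s - r) / 2). split; lra.
    - exists 1. split; [lra | exact I]. }
  destruct Hd as (d & Hd & Hle). exists d. split; [exact Hd|].
  exists (Z.of_nat n). intros x Sx Hx.
  exact (Rbar_le_trans (Finite (r + d)) _ _ Hle (tail_inf_lb S g n x Sx Hx)).
Qed.

Lemma Rbar_mult_neg_p_infty c : 0 < c -> Rbar_mult (Finite (- c)) p_infty = m_infty.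
Proof.
  intros Hc. unfold Rbar_mult, Rbar_mult'.
  destruct (Rle_dec 0 (- c)); [exfalso; lra | reflexivity].
Qed.

Lemma Rbar_mult_neg_nonpos c (t : Rbar) : 0 < c -> Rbar_le 0 t ->
  Rbar_le (Rbar_mult (Finite (- c)) t) 0.
Proof.
  intros Hc Ht. destruct t as [t| |]; simpl in Ht; try contradiction.
  - simpl. nra.
  - rewrite Rbar_mult_neg_p_infty by exact Hc. exact I.
Qed.

Lemma Rbar_le_mult_Sup_seq (L : Rbar) (t : nat -> Rbar) c n0 : 0 < c ->
  (forall n m, (n <= m)%nat -> Rbar_le (t n) (t m)) ->
  (forall n, (n0 <= n)%nat -> Rbar_le 0 (t n) /\ Rbar_le L (Rbar_mult (Finite (- c)) (t n))) ->
  Rbar_le L (Rbar_mult (Finite (- c)) (Sup_seq t)).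
Proof.
  intros Hc Hmono H.
  destruct (H n0 (le_n _)) as [Ht0 HL0].
  assert (Hsup0 := Rbar_le_trans _ _ _ Ht0 (is_sup_seq_major _ _ n0 (Sup_seq_correct t))).
  destruct L as [l| |]; [| | exact I].
  - assert (Hb : forall n, Rbar_le (t n) (Finite (- l / c))).
    { intros n. apply (Rbar_le_trans _ (t (max n n0))); [apply Hmono; lia|].
      destruct (H (max n n0) (Nat.le_max_r _ _)) as [Hn HLn].
      destruct (t (max n n0)) as [s| |]; simpl in Hn |- *; try contradiction.
      - simpl in HLn. apply (Rmult_le_reg_l c); [exact Hc|].
        replace (c * (- l / c)) with (- l) by (field; lra). lra.
      - rewrite Rbar_mult_neg_p_infty in HLn by exact Hc. exact HLn. }
    assert (Hsup : Rbar_le (Sup_seq t) (Finite (- l / c))).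
    { apply Rbar_not_lt_le. intros Hlt. apply Sup_seq_minor_lt in Hlt.
      destruct Hlt as [n Hn]. exact (Rbar_lt_not_le _ _ Hn (Hb n)). }
    destruct (Sup_seq t) as [s| |]; simpl in Hsup0, Hsup |- *; try contradiction.
    apply (Rmult_le_compat_l c) in Hsup; [|lra].
    replace (c * (- l / c)) with (- l) in Hsup by (field; lra). lra.
  - destruct (t n0) as [s| |]; simpl in Ht0; try contradiction.
    rewrite Rbar_mult_neg_p_infty in HL0 by exact Hc. contradiction.
Qed.

Lemma limsup_le_mult_liminf S (g h : Z -> R) c : 0 < c ->
  eventually_S S (fun x => g x <= - c * h x /\ 0 <= h x) ->
  Rbar_le (limsupS S g) (Rbar_mult (Finite (- c)) (liminfS S h)) /\
  Rbar_le (Rbar_mult (Finite (- c)) (liminfS S h)) (Finite 0).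
Proof.
  intros Hc [N HN].
  assert (Htail : forall n, (Z.to_nat N <= n)%nat ->
    Rbar_le 0 (tail_inf S h n) /\
    Rbar_le (limsupS S g) (Rbar_mult (Finite (- c)) (tail_inf S h n))).
  { intros n Hn.
    assert (HNn : forall x, S x -> (Z.of_nat n <= x)%Z -> g x <= - c * h x /\ 0 <= h x)
      by (intros x Sx Hx; apply HN; [assumption | lia]).
    assert (H0 : Rbar_le 0 (tail_inf S h n)) by (apply tail_inf_ge; apply HNn).
    split; [exact H0|].
    apply (Rbar_le_trans _ (tail_sup S g n)); [apply Inf_seq_le_term|].
    apply tail_sup_le. intros x Sx Hx.
    assert (Hlb := tail_inf_lb S h n x Sx Hx). destruct (HNn x Sx Hx) as [Hg Hh].
    destruct (tail_inf S h n) as [t| |]; simpl in H0, Hlb |- *; try contradiction. nra. }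
  split.
  - apply (Rbar_le_mult_Sup_seq _ _ c (Z.to_nat N) Hc); [|exact Htail].
    intros n m; apply tail_inf_mono.
  - apply Rbar_mult_neg_nonpos; [exact Hc|].
    apply (Rbar_le_trans _ (tail_inf S h (Z.to_nat N))); [apply Htail; lia|].
    apply (is_sup_seq_major _ _ _ (Sup_seq_correct _)).
Qed.

(** * A third-order Taylor bound *)

Lemma le_of_le_derive (G H G' H' : R -> R) x y : x <= y -> G x <= H x ->
  (forall t, x <= t <= y -> is_derive G t (G' t) /\ is_derive H t (H' t) /\ G' t <= H' t) ->
  G y <= H y.
Proof.
  intros Hxy H0 HD. destruct (Req_dec x y) as [<-|Hne]; [exact H0|].
  destruct (MVT_cor2 (fun t => G t - H t) (fun t => G' t - H' t) x y) as (c & Heq & Hc).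
  - lra.
  - intros c Hc. destruct (HD c Hc) as (HG & HH & _).
    apply derivable_pt_lim_minus; apply is_derive_Reals; assumption.
  - destruct (HD c ltac:(lra)) as (_ & _ & Hle). nra.
Qed.

Lemma le_of_ge_derive (G H G' H' : R -> R) x y : y <= x -> G x <= H x ->
  (forall t, y <= t <= x -> is_derive G t (G' t) /\ is_derive H t (H' t) /\ H' t <= G' t) ->
  G y <= H y.
Proof.
  intros Hyx H0 HD. destruct (Req_dec x y) as [<-|Hne]; [exact H0|].
  destruct (MVT_cor2 (fun t => G t - H t) (fun t => G' t - H' t) y x) as (c & Heq & Hc).
  - lra.
  - intros c Hc. destruct (HD c Hc) as (HG & HH & _).
    apply derivable_pt_lim_minus; apply is_derive_Reals; assumption.
  - destruct (HD c ltac:(lra)) as (_ & _ & Hle). nra.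
Qed.

Lemma taylor3_le_right (F F1 F2 F3 : R -> R) (M x y : R) : x <= y ->
  (forall t, x <= t <= y -> is_derive F t (F1 t) /\ is_derive F1 t (F2 t) /\
     is_derive F2 t (F3 t) /\ F3 t <= M) ->
  F y <= F x + F1 x * (y - x) + F2 x * (y - x) ^ 2 / 2 + M * (y - x) ^ 3 / 6.
Proof.
  intros Hxy HD.
  assert (B2 : forall s, x <= s <= y -> F2 s <= F2 x + M * (s - x)).
  { intros s Hs.
    apply (le_of_le_derive F2 (fun s => F2 x + M * (s - x)) F3 (fun _ => M) x s); [lra | lra |].
    intros t Ht. destruct (HD t ltac:(lra)) as (_ & _ & D3 & HM).
    refine (conj D3 (conj _ HM)). auto_derive; [exact I | ring]. }
  assert (B1 : forall s, x <= s <= y -> F1 s <= F1 x + F2 x * (s - x) + M * (s - x) ^ 2 / 2).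
  { intros s Hs.
    apply (le_of_le_derive F1 (fun s => F1 x + F2 x * (s - x) + M * (s - x) ^ 2 / 2)
      F2 (fun t => F2 x + M * (t - x)) x s); [lra | lra |].
    intros t Ht. destruct (HD t ltac:(lra)) as (_ & D2 & _).
    refine (conj D2 (conj _ (B2 t ltac:(lra)))). auto_derive; [exact I | field]. }
  apply (le_of_le_derive F
    (fun s => F x + F1 x * (s - x) + F2 x * (s - x) ^ 2 / 2 + M * (s - x) ^ 3 / 6)
    F1 (fun t => F1 x + F2 x * (t - x) + M * (t - x) ^ 2 / 2) x y); [lra | lra |].
  intros t Ht. destruct (HD t Ht) as (D1 & _).
  refine (conj D1 (conj _ (B1 t Ht))). auto_derive; [exact I | field].
Qed.

(* Integrating leftwards from [x] reverses the comparisons, so the lower bound on [F3]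
   is the one that matters. *)
Lemma taylor3_le_left (F F1 F2 F3 : R -> R) (M x y : R) : y <= x ->
  (forall t, y <= t <= x -> is_derive F t (F1 t) /\ is_derive F1 t (F2 t) /\
     is_derive F2 t (F3 t) /\ - M <= F3 t) ->
  F y <= F x + F1 x * (y - x) + F2 x * (y - x) ^ 2 / 2 + M * (x - y) ^ 3 / 6.
Proof.
  intros Hyx HD.
  assert (B2 : forall s, y <= s <= x -> F2 s <= F2 x + M * (x - s)).
  { intros s Hs.
    apply (le_of_ge_derive F2 (fun s => F2 x + M * (x - s)) F3 (fun _ => - M) x s); [lra | lra |].
    intros t Ht. destruct (HD t ltac:(lra)) as (_ & _ & D3 & HM).
    refine (conj D3 (conj _ HM)). auto_derive; [exact I | ring]. }
  assert (B1 : forall s, y <= s <= x -> F1 x + F2 x * (s - x) - M * (x - s) ^ 2 / 2 <= F1 s).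
  { intros s Hs.
    apply (le_of_ge_derive (fun s => F1 x + F2 x * (s - x) - M * (x - s) ^ 2 / 2) F1
      (fun t => F2 x + M * (x - t)) F2 x s); [lra | lra |].
    intros t Ht. destruct (HD t ltac:(lra)) as (_ & D2 & _).
    refine (conj _ (conj D2 (B2 t ltac:(lra)))). auto_derive; [exact I | field]. }
  apply (le_of_ge_derive F
    (fun s => F x + F1 x * (s - x) + F2 x * (s - x) ^ 2 / 2 + M * (x - s) ^ 3 / 6)
    F1 (fun t => F1 x + F2 x * (t - x) - M * (x - t) ^ 2 / 2) x y); [lra | lra |].
  intros t Ht. destruct (HD t Ht) as (D1 & _).
  refine (conj D1 (conj _ (B1 t Ht))). auto_derive; [exact I | field].
Qed.

Lemma taylor3_le (F F1 F2 F3 : R -> R) (M x y : R) :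
  (forall t, Rabs (t - x) <= Rabs (y - x) ->
     is_derive F t (F1 t) /\ is_derive F1 t (F2 t) /\ is_derive F2 t (F3 t) /\
     Rabs (F3 t) <= M) ->
  F y <= F x + F1 x * (y - x) + F2 x * (y - x) ^ 2 / 2 + M * Rabs (y - x) ^ 3 / 6.
Proof.
  intros HD. destruct (Rle_or_lt x y) as [Hxy|Hyx].
  - rewrite Rabs_pos_eq by lra. apply taylor3_le_right with F3; [exact Hxy|].
    intros t Ht. destruct (HD t) as (D1 & D2 & D3 & HM); [rewrite !Rabs_pos_eq; lra|].
    refine (conj D1 (conj D2 (conj D3 _))). apply Rabs_le_between in HM. lra.
  - rewrite Rabs_left, Ropp_minus_distr by lra. apply taylor3_le_left with F3; [lra|].
    intros t Ht. destruct (HD t) as (D1 & D2 & D3 & HM); [rewrite !Rabs_left1; lra|].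
    refine (conj D1 (conj D2 (conj D3 _))). apply Rabs_le_between in HM. lra.
Qed.

(** * The Lyapunov function [(ln t)^b] *)

Definition lnpow (b t : R) : R := Rpower (ln t) b.
Definition lnpow_d1 (b t : R) : R := b * lnpow b t / (ln t * t).
Definition lnpow_d2 (b t : R) : R := b * lnpow b t * (b - 1 - ln t) / (ln t ^ 2 * t ^ 2).
Definition lnpow_d3 (b t : R) : R :=
  b * lnpow b t * (2 * ln t ^ 2 + (3 - 3 * b) * ln t + (b ^ 2 - 3 * b + 2)) /
  (ln t ^ 3 * t ^ 3).

Lemma lnpow_pos b t : 0 < lnpow b t.
Proof. apply exp_pos. Qed.

Lemma one_le_ln t : 3 <= t -> 1 <= ln t.
Proof.
  intros Ht. rewrite <- (ln_exp 1).
  apply ln_le; [apply exp_pos | pose proof exp_le_3; lra].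
Qed.

Lemma lnpow_derive b t : 1 < t ->
  is_derive (lnpow b) t (lnpow_d1 b t) /\ is_derive (lnpow_d1 b) t (lnpow_d2 b t) /\
  is_derive (lnpow_d2 b) t (lnpow_d3 b t).
Proof.
  intros Ht. assert (HL : 0 < ln t) by (rewrite <- ln_1; apply ln_increasing; lra).
  unfold lnpow_d3, lnpow_d2, lnpow_d1, lnpow, Rpower.
  split; [|split].
  - auto_derive; [lra|]. field. lra.
  - auto_derive; [repeat split; try lra; apply Rmult_integral_contrapositive; lra|].
    field. lra.
  - auto_derive; [repeat split; try lra; apply Rgt_not_eq; apply Rmult_lt_0_compat; nra|].
    field. lra.
Qed.

Lemma lnpow_le_ln b t : 1 <= ln t -> b <= 1 -> lnpow b t <= ln t.
Proof.
  intros HL Hb. unfold lnpow. rewrite <- (Rpower_1 (ln t)) at 2 by lra.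
  apply Rle_Rpower; lra.
Qed.

Lemma lnpow_d3_bound b t : 3 <= t -> Rabs b <= 1 / 2 -> Rabs (lnpow_d3 b t) <= 6 / t ^ 3.
Proof.
  intros Ht Hb.
  assert (HL := one_le_ln t Ht).
  assert (HP : 0 < lnpow b t <= ln t).
  { split; [apply lnpow_pos | apply lnpow_le_ln; [lra | apply Rabs_le_between in Hb; lra]]. }
  unfold lnpow_d3.
  set (L := ln t) in *. set (P := lnpow b t) in *.
  set (Q := 2 * L ^ 2 + (3 - 3 * b) * L + (b ^ 2 - 3 * b + 2)).
  assert (HQ : 0 < Q <= 11 * L ^ 2) by (apply Rabs_le_between in Hb; unfold Q; split; nra).
  assert (Ht3 : 0 < t ^ 3) by (apply pow_lt; lra).
  assert (HL3 : 0 < L ^ 3) by (apply pow_lt; lra).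
  assert (HPQ : 0 <= P * Q / L ^ 3 <= 11).
  { split; [apply Rle_mult_inv_pos; nra|].
    apply Rmult_le_reg_r with (L ^ 3); [exact HL3|].
    replace (P * Q / L ^ 3 * L ^ 3) with (P * Q) by (field; lra).
    assert (P * Q <= L * (11 * L ^ 2)) by (apply Rmult_le_compat; lra). simpl in *. lra. }
  replace (b * P * Q / (L ^ 3 * t ^ 3)) with (b * (P * Q / L ^ 3) / t ^ 3) by (field; lra).
  rewrite Rabs_div, Rabs_mult, (Rabs_pos_eq (P * Q / L ^ 3)), (Rabs_pos_eq (t ^ 3)) by lra.
  unfold Rdiv. apply Rmult_le_compat_r; [left; apply Rinv_0_lt_compat; exact Ht3|].
  assert (0 <= Rabs b) by apply Rabs_pos. nra.
Qed.

Lemma Rpower_two_sub (L b : R) : 0 < L -> Rpower L (2 - b) = L ^ 2 / Rpower L b.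
Proof.
  intros HL. assert (HP : 0 < Rpower L b) by apply exp_pos.
  apply (Rmult_eq_reg_r (Rpower L b)); [|lra].
  rewrite <- Rpower_plus. replace (2 - b + b) with (INR 2) by (simpl; ring).
  rewrite Rpower_pow by exact HL. field. lra.
Qed.

Lemma lnpow_drift_identity b X m v : 1 < X -> v <> 0 ->
  lnpow_d1 b X * m + lnpow_d2 b X * v =
  b * (ln X * (m * X - 1 * v) / v + b - 1) * (v / (X ^ 2 * Rpower (ln X) (2 - b))).
Proof.
  intros HX Hv. assert (HL : 0 < ln X) by (rewrite <- ln_1; apply ln_increasing; lra).
  assert (HP := lnpow_pos b X).
  rewrite Rpower_two_sub by exact HL. unfold lnpow_d1, lnpow_d2. fold (lnpow b X).
  field. repeat split; lra.
Qed.

Lemma cubic_error_le a b K X v : 0 < a -> Rabs b <= 1 / 2 -> 0 < v -> 0 < X ->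
  1 <= ln X -> 8 * K * ln X ^ 3 <= a ^ 2 * X ->
  16 * K * v / X ^ 3 <= 2 * a ^ 2 * (v / (X ^ 2 * Rpower (ln X) (2 - b))).
Proof.
  intros Ha Hb Hv HX HL Hlarge. apply Rabs_le_between in Hb.
  assert (HL3 : 0 < ln X ^ 3) by (apply pow_lt; lra).
  assert (HX2 : 0 < X ^ 2) by (apply pow_lt; lra).
  assert (HRp : Rpower (ln X) (2 - b) <= ln X ^ 3).
  { rewrite <- Rpower_pow by lra. apply Rle_Rpower; [lra | simpl; lra]. }
  assert (HRp0 : 0 < Rpower (ln X) (2 - b)) by apply exp_pos.
  apply Rle_trans with (2 * a ^ 2 * (v / (X ^ 2 * ln X ^ 3))).
  - replace (16 * K * v / X ^ 3) with (2 * v / (X ^ 3 * ln X ^ 3) * (8 * K * ln X ^ 3))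
      by (field; lra).
    replace (2 * a ^ 2 * (v / (X ^ 2 * ln X ^ 3))) with (2 * v / (X ^ 3 * ln X ^ 3) * (a ^ 2 * X))
      by (field; lra).
    apply Rmult_le_compat_l; [|exact Hlarge].
    apply Rle_mult_inv_pos; [lra | apply Rmult_lt_0_compat; apply pow_lt; lra].
  - apply Rmult_le_compat_l; [nra|]. unfold Rdiv. apply Rmult_le_compat_l; [lra|].
    apply Rinv_le_contravar; [nra | apply Rmult_le_compat_l; lra].
Qed.

(* From [exp L >= L ^ 4 / 4!]. *)
Lemma ln_cube_le (K c X : R) : 0 <= K -> 0 < c -> 0 < X -> 256 * K / c <= ln X ->
  K * ln X ^ 3 <= c * X.
Proof.
  intros HK Hc HX HL. set (L := ln X) in *.
  assert (HL0 : 0 <= L) by (apply Rle_trans with (256 * K / c); [apply Rle_mult_inv_pos|]; lra).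
  assert (Hexp := exp_ge_taylor L 4 HL0). simpl in Hexp.
  replace (exp L) with X in Hexp by (symmetry; apply exp_ln; exact HX).
  assert (HL3 : 0 <= L ^ 3) by (apply pow_le; lra).
  assert (HcL : 256 * K <= c * L).
  { replace (256 * K) with (c * (256 * K / c)) by (field; lra). apply Rmult_le_compat_l; lra. }
  assert (Hquart : L * L ^ 3 / 256 <= X) by (simpl in *; nra).
  apply Rle_trans with (c * (L * L ^ 3 / 256)); [|apply Rmult_le_compat_l; lra].
  replace (c * (L * L ^ 3 / 256)) with (c * L / 256 * L ^ 3) by field.
  apply Rmult_le_compat_r; lra.
Qed.
(** * Drift of [(ln x)^b] under the generator *)

Definition jump_bound (Gam : list Z) : R := sumG Gam (fun e => Rabs (IZR e)).

Definition diffu_weight (Gam : list Z) (lam : Z -> Z -> R) (p : R) (x : Z) : R :=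
  diffu Gam lam x / (IZR x ^ 2 * Rpower (ln (IZR x)) p).

Lemma sumG_nonneg Gam (g : Z -> R) : (forall e, In e Gam -> 0 <= g e) -> 0 <= sumG Gam g.
Proof.
  induction Gam as [|e G IH]; simpl; intros H; [lra|].
  assert (0 <= g e) by auto. assert (0 <= sumG G g) by auto. lra.
Qed.

Lemma sumG_term Gam (g : Z -> R) e0 : (forall e, In e Gam -> 0 <= g e) -> In e0 Gam ->
  g e0 <= sumG Gam g.
Proof.
  induction Gam as [|e G IH]; simpl; intros H Hin; [contradiction|].
  assert (0 <= g e) by auto. assert (0 <= sumG G g) by (apply sumG_nonneg; auto).
  destruct Hin as [->|Hin]; [lra|]. assert (g e0 <= sumG G g) by auto. lra.
Qed.

Lemma sumG_le Gam (g1 g2 : Z -> R) : (forall e, In e Gam -> g1 e <= g2 e) ->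
  sumG Gam g1 <= sumG Gam g2.
Proof.
  induction Gam as [|e G IH]; simpl; intros H; [lra|].
  apply Rplus_le_compat; auto.
Qed.

Lemma sumG_lin Gam (f g : Z -> R) A B :
  sumG Gam (fun e => A * f e + B * g e) = A * sumG Gam f + B * sumG Gam g.
Proof. induction Gam as [|e G IH]; simpl; [ring | rewrite IH; ring]. Qed.

Lemma jump_bound_nonneg Gam : 0 <= jump_bound Gam.
Proof. apply sumG_nonneg. intros; apply Rabs_pos. Qed.

Lemma jump_bound_ge Gam e : In e Gam -> Rabs (IZR e) <= jump_bound Gam.
Proof. apply (sumG_term Gam (fun e => Rabs (IZR e))). intros; apply Rabs_pos. Qed.

Lemma clos_rt1n_exit (S : Z -> Prop) lam a b :
  clos_refl_trans_1n Z (step S lam) a b -> a <> b -> exists z, step S lam a z /\ z <> a.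
Proof.
  induction 1 as [a|a z b Hs Hr IH]; intros Hne; [congruence|].
  destruct (Z.eq_dec z a) as [->|Hz]; [apply IH; auto | eauto].
Qed.

(* Irreducibility on an unbounded state space forces a jump out of every state. *)
Lemma diffu_pos S Gam lam x : chain_ok S Gam lam -> S x -> 0 < diffu Gam lam x.
Proof.
  intros (_ & Hu & _ & Hgam & Hnn & _ & Hirr) Sx.
  destruct (Hu (x + 1)%Z) as (y & Sy & Hy).
  assert (Hr := clos_rt_rt1n _ _ _ _ (Hirr x y Sx Sy)).
  destruct (clos_rt1n_exit S lam x y Hr ltac:(lia)) as (z & (_ & Sz & Hl) & Hz).
  assert (Hin : In (z - x)%Z Gam).
  { destruct (In_dec Z.eq_dec (z - x)%Z Gam) as [i|ni]; [exact i|].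
    rewrite (Hgam _ _ Sx ni) in Hl. lra. }
  assert (Hterm : IZR (z - x) ^ 2 * lam (z - x)%Z x <=
                  sumG Gam (fun e => IZR e ^ 2 * lam e x)).
  { apply (sumG_term Gam (fun e => IZR e ^ 2 * lam e x)); [|exact Hin].
    intros e _. apply Rmult_le_pos; [apply pow2_ge_0 | apply Hnn; exact Sx]. }
  assert (Hz2 : 0 < IZR (z - x) ^ 2) by (apply pow2_gt_0, not_0_IZR; lia).
  unfold diffu. nra.
Qed.

(* On the segment between [X] and [X + E] we have [t >= X / 2], so [|f'''| <= 48 / X^3]. *)
Lemma lnpow_increment_le b K X E : Rabs b <= 1 / 2 -> K + 3 <= X -> 2 * K <= X ->
  Rabs E <= K ->
  lnpow b (X + E) - lnpow b X <=
    lnpow_d1 b X * E + (lnpow_d2 b X / 2 + 8 * K / X ^ 3) * E ^ 2.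
Proof.
  intros Hb HK3 HK2 HE.
  assert (HK0 : 0 <= K) by (pose proof (Rabs_pos E); lra).
  assert (HX3 : 0 < X ^ 3) by (apply pow_lt; lra).
  assert (T := taylor3_le (lnpow b) (lnpow_d1 b) (lnpow_d2 b) (lnpow_d3 b) (48 / X ^ 3) X (X + E)).
  replace (X + E - X) with E in T by ring.
  assert (HT : lnpow b (X + E) <=
    lnpow b X + lnpow_d1 b X * E + lnpow_d2 b X * E ^ 2 / 2 + 48 / X ^ 3 * Rabs E ^ 3 / 6).
  { apply T. intros t Ht.
    pose proof (Rle_trans _ _ _ Ht HE) as HtK. apply Rabs_le_between in HtK.
    destruct (lnpow_derive b t ltac:(lra)) as (D1 & D2 & D3).
    refine (conj D1 (conj D2 (conj D3 _))).
    apply Rle_trans with (6 / t ^ 3); [apply lnpow_d3_bound; lra|].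
    assert (Hpt : (X / 2) ^ 3 <= t ^ 3) by (apply pow_incr; lra).
    assert (0 < (X / 2) ^ 3) by (apply pow_lt; lra).
    replace (48 / X ^ 3) with (6 / (X / 2) ^ 3) by (field; lra).
    unfold Rdiv. apply Rmult_le_compat_l; [lra|]. apply Rinv_le_contravar; lra. }
  assert (HE3 : Rabs E ^ 3 <= K * E ^ 2).
  { replace (Rabs E ^ 3) with (Rabs E * E ^ 2) by (rewrite <- (pow2_abs E); ring).
    apply Rmult_le_compat_r; [apply pow2_ge_0 | exact HE]. }
  assert (Hcube : 48 / X ^ 3 * Rabs E ^ 3 / 6 <= 8 * K / X ^ 3 * E ^ 2).
  { replace (48 / X ^ 3 * Rabs E ^ 3 / 6) with (8 / X ^ 3 * Rabs E ^ 3) by (field; lra).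
    replace (8 * K / X ^ 3 * E ^ 2) with (8 / X ^ 3 * (K * E ^ 2)) by (field; lra).
    apply Rmult_le_compat_l; [apply Rle_mult_inv_pos; lra | exact HE3]. }
  lra.
Qed.

Lemma gen_lnpow_le_taylor S Gam lam b x : chain_ok S Gam lam -> S x -> Rabs b <= 1 / 2 ->
  jump_bound Gam + 3 <= IZR x -> 2 * jump_bound Gam <= IZR x ->
  gen Gam lam (fun z => lnpow b (IZR z)) x <=
    lnpow_d1 b (IZR x) * drift Gam lam x + lnpow_d2 b (IZR x) * diffu Gam lam x
    + 16 * jump_bound Gam * diffu Gam lam x / IZR x ^ 3.
Proof.
  intros (_ & _ & _ & _ & Hnn & _) Sx Hb HK3 HK2.
  set (K := jump_bound Gam) in *. set (X := IZR x) in *.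
  assert (HK0 : 0 <= K) by apply jump_bound_nonneg.
  unfold gen.
  apply Rle_trans with (sumG Gam (fun e => lnpow_d1 b X * (IZR e * lam e x)
       + (lnpow_d2 b X / 2 + 8 * K / X ^ 3) * (IZR e ^ 2 * lam e x))).
  - apply sumG_le. intros e Hin. rewrite plus_IZR. fold X.
    assert (Hl : 0 <= lam e x) by (apply Hnn; exact Sx).
    assert (Hinc := lnpow_increment_le b K X (IZR e) Hb HK3 HK2 (jump_bound_ge Gam e Hin)).
    apply (Rmult_le_compat_l (lam e x)) in Hinc; [|exact Hl]. lra.
  - rewrite sumG_lin. unfold drift, diffu. right. field. lra.
Qed.

Lemma eventually_large (c : R) : exists N : Z, forall x, (N <= x)%Z ->
  c <= IZR x /\ c <= ln (IZR x).
Proof.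
  exists (up (Rabs c + exp c)). intros x Hx.
  destruct (archimed (Rabs c + exp c)) as [Hup _]. apply IZR_le in Hx.
  pose proof (Rle_abs c). pose proof (Rabs_pos c). pose proof (exp_pos c).
  split; [lra|]. rewrite <- (ln_exp c) at 1. apply ln_le; lra.
Qed.

Lemma gen_lnpow_le S Gam lam a b : chain_ok S Gam lam -> 0 < a -> Rabs b <= 1 / 2 ->
  eventually_S S (fun x => 0 < diffu_weight Gam lam (2 - b) x /\
    gen Gam lam (fun z => lnpow b (IZR z)) x <=
      (b * (Hp Gam lam 1 x + b - 1) + 2 * a ^ 2) * diffu_weight Gam lam (2 - b) x).
Proof.
  intros Hc Ha Hb.
  set (K := jump_bound Gam).
  assert (HK0 : 0 <= K) by apply jump_bound_nonneg.
  assert (Ha2 : 0 < a ^ 2) by (apply pow_lt; lra).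
  assert (HKa : 0 <= 2048 * K / a ^ 2) by (apply Rle_mult_inv_pos; lra).
  (* [2 K + 3] makes the Taylor step valid, [2048 K / a^2] makes the cubic error small. *)
  destruct (eventually_large (2 * K + 3 + 2048 * K / a ^ 2)) as [N HN].
  exists N. intros x Sx Hx. destruct (HN x Hx) as [HX HL].
  assert (Hv := diffu_pos S Gam lam x Hc Sx).
  assert (Hw : 0 < diffu_weight Gam lam (2 - b) x).
  { apply Rdiv_lt_0_compat; [exact Hv|].
    apply Rmult_lt_0_compat; [apply pow_lt; lra | apply exp_pos]. }
  assert (Herr : 16 * K * diffu Gam lam x / IZR x ^ 3 <=
                 2 * a ^ 2 * diffu_weight Gam lam (2 - b) x).
  { apply cubic_error_le; [exact Ha | exact Hb | exact Hv | lra | lra |].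
    replace (8 * K * ln (IZR x) ^ 3) with (K * ln (IZR x) ^ 3 * 8) by ring.
    replace (a ^ 2 * IZR x) with (a ^ 2 / 8 * IZR x * 8) by field.
    apply Rmult_le_compat_r; [lra|]. apply ln_cube_le; [lra | lra | lra |].
    replace (256 * K / (a ^ 2 / 8)) with (2048 * K / a ^ 2) by (field; lra). lra. }
  split; [exact Hw|].
  eapply Rle_trans; [apply (gen_lnpow_le_taylor S); auto; fold K; lra|].
  fold K. rewrite lnpow_drift_identity by lra.
  unfold Hp, diffu_weight in *. lra.
Qed.

Lemma lnpow_lyapunov S Gam lam a b : chain_ok S Gam lam -> 0 < a -> Rabs b <= 1 / 2 ->
  eventually_S S (fun x => b * (Hp Gam lam 1 x + b - 1) <= - 3 * a ^ 2) ->
  eventually_S S (fun x => gen Gam lam (fun z => lnpow b (IZR z)) x < 0) /\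
  Rbar_le (limsupS S (gen Gam lam (fun z => lnpow b (IZR z))))
    (Rbar_mult (Finite (- a ^ 2)) (liminfS S (diffu_weight Gam lam (2 - b)))) /\
  Rbar_le (Rbar_mult (Finite (- a ^ 2)) (liminfS S (diffu_weight Gam lam (2 - b)))) (Finite 0).
Proof.
  intros Hc Ha Hb HH.
  assert (Ha2 : 0 < a ^ 2) by (apply pow_lt; lra).
  assert (Hev : eventually_S S (fun x =>
    gen Gam lam (fun z => lnpow b (IZR z)) x <= - a ^ 2 * diffu_weight Gam lam (2 - b) x /\
    0 < diffu_weight Gam lam (2 - b) x)).
  { apply (eventually_S_mono _ _ _
      (eventually_S_and _ _ _ (gen_lnpow_le S Gam lam a b Hc Ha Hb) HH)).
    intros x _ ((Hw & Hg) & Hx). split; [nra | exact Hw]. }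
  split.
  - apply (eventually_S_mono _ _ _ Hev). intros x _ [Hg Hw]. nra.
  - apply limsup_le_mult_liminf; [exact Ha2|].
    apply (eventually_S_mono _ _ _ Hev). intros x _ [Hg Hw]. split; lra.
Qed.

Lemma ln_ln_large (c : R) : exists N : Z, forall x, (N <= x)%Z -> c < ln (ln (IZR x)).
Proof.
  destruct (eventually_large (exp (c + 1))) as [N HN]. exists N. intros x Hx.
  destruct (HN x Hx) as [_ HL].
  assert (c + 1 <= ln (ln (IZR x))).
  { rewrite <- (ln_exp (c + 1)). apply ln_le; [apply exp_pos | exact HL]. }
  lra.
Qed.

Lemma lnpow_to_infty S a : 0 < a -> to_infty_S S (fun z => lnpow a (IZR z)).
Proof.
  intros Ha M. destruct (ln_ln_large (ln (Rabs M + 1) / a)) as [N HN].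
  exists N. intros x _ Hx. specialize (HN x Hx).
  assert (HM := Rle_abs M).
  apply Rlt_le_trans with (Rabs M + 1); [lra|].
  rewrite <- (exp_ln (Rabs M + 1)) by (pose proof (Rabs_pos M); lra).
  unfold lnpow, Rpower. left. apply exp_increasing.
  apply (Rmult_lt_compat_l a) in HN; [|exact Ha].
  replace (a * (ln (Rabs M + 1) / a)) with (ln (Rabs M + 1)) in HN by (field; lra). lra.
Qed.

Lemma lnpow_to_0 S a : 0 < a -> to_lim_S S (fun z => lnpow (- a) (IZR z)) 0.
Proof.
  intros Ha e He. destruct (ln_ln_large (- ln e / a)) as [N HN].
  exists N. intros x _ Hx. specialize (HN x Hx).
  rewrite Rminus_0_r, Rabs_pos_eq by (left; apply lnpow_pos).
  rewrite <- (exp_ln e) by exact He.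
  unfold lnpow, Rpower. apply exp_increasing.
  apply (Rmult_lt_compat_l a) in HN; [|exact Ha].
  replace (a * (- ln e / a)) with (- ln e) in HN by (field; lra). lra.
Qed.

Theorem mainTheorem2 (S : Z -> Prop) (Gam : list Z) (lam : Z -> Z -> R) :
  chain_ok S Gam lam ->
  (Rbar_lt (limsupS S (Hp Gam lam 1)) (Finite 1) ->
   exists (f : Z -> R) (eps : R), 0 < eps /\
     (forall x, S x -> 0 < f x) /\
     to_infty_S S f /\
     eventually_S S (fun x => gen Gam lam f x < 0) /\
     Rbar_le (limsupS S (gen Gam lam f))
       (Rbar_mult (Finite (- (eps / 2) ^ 2))
          (liminfS S (fun x => diffu Gam lam x /
                (IZR x ^ 2 * Rpower (ln (IZR x)) (2 - eps / 2))))) /\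
     Rbar_le
       (Rbar_mult (Finite (- (eps / 2) ^ 2))
          (liminfS S (fun x => diffu Gam lam x /
                (IZR x ^ 2 * Rpower (ln (IZR x)) (2 - eps / 2)))))
       (Finite 0)) /\
  (Rbar_lt (Finite 1) (liminfS S (Hp Gam lam 1)) ->
   exists (f : Z -> R) (eps : R), 0 < eps /\
     (forall x, S x -> 0 < f x) /\
     to_lim_S S f 0 /\
     eventually_S S (fun x => gen Gam lam f x < 0) /\
     Rbar_le (limsupS S (gen Gam lam f))
       (Rbar_mult (Finite (- (eps / 2) ^ 2))
          (liminfS S (fun x => diffu Gam lam x /
                (IZR x ^ 2 * Rpower (ln (IZR x)) (2 + eps / 2))))) /\
     Rbar_le
       (Rbar_mult (Finite (- (eps / 2) ^ 2))
          (liminfS S (fun x => diffu Gam lam x /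
                (IZR x ^ 2 * Rpower (ln (IZR x)) (2 + eps / 2)))))
       (Finite 0)).
Proof.
  intros Hc. split; intros Hlim.
  - destruct (limsup_lt S _ 1 Hlim) as (d & Hd & HH).
    set (a := Rmin (d / 4) (1 / 2)).
    assert (Ha : 0 < a <= d / 4 /\ a <= 1 / 2)
      by (unfold a; repeat split; [apply Rmin_glb_lt | apply Rmin_l | apply Rmin_r]; lra).
    exists (fun z => lnpow a (IZR z)), (2 * a). replace (2 * a / 2) with a by field.
    destruct (lnpow_lyapunov S Gam lam a a Hc) as (Hneg & Hsup & Hle);
      [lra | rewrite Rabs_pos_eq; lra | |].
    (* [a (H_1 + a - 1) <= a (a - d) <= - 3 a^2] since [a <= d / 4]. *)
    { apply (eventually_S_mono _ _ _ HH). intros x _ Hx. nra. }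
    repeat split; [lra | intros; apply lnpow_pos | apply lnpow_to_infty; lra | ..]; assumption.
  - destruct (liminf_gt S _ 1 Hlim) as (d & Hd & HH).
    set (a := Rmin (d / 4) (1 / 2)).
    assert (Ha : 0 < a <= d / 4 /\ a <= 1 / 2)
      by (unfold a; repeat split; [apply Rmin_glb_lt | apply Rmin_l | apply Rmin_r]; lra).
    exists (fun z => lnpow (- a) (IZR z)), (2 * a). replace (2 * a / 2) with a by field.
    replace (2 + a) with (2 - - a) by ring.
    destruct (lnpow_lyapunov S Gam lam a (- a) Hc) as (Hneg & Hsup & Hle);
      [lra | rewrite Rabs_Ropp, Rabs_pos_eq; lra | |].
    { apply (eventually_S_mono _ _ _ HH). intros x _ Hx. nra. }
    repeat split; [lra | intros; apply lnpow_pos | apply lnpow_to_0; lra | ..]; assumption.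
Qed.
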